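(* Let $D_1$ be an $m\times m$ Euclidean distance matrix (EDM) of embedding dimension $r_1$, and let $D_2$ be an $n\times n$ EDM of embedding dimension $r_2$. Then the $mn\times mn$ matrix $D = E_m\otimes D_2 + D_1\otimes E_n$ is an EDM of embedding dimension $r_1+r_2$, where $E_k$ denotes the $k\times k$ matrix of all ones and $\otimes$ denotes the Kronecker product.
   Context: An $N\times N$ matrix $D=(d_{ij})$ is a Euclidean distance matrix (EDM) if there exist points $p^1,\dots,p^N$ in some Euclidean space $\mathbb{R}^s$ with $d_{ij}=\|p^i-p^j\|^2$ for all $i,j$ (Euclidean norm); the dimension of the affine span of these points is called the embedding dimension of $D$. *)

From mathcomp Require Import all_boot all_order all_algebra.
Set Implicit Arguments. Unset Strict Implicit. Unset Printing Implicit Defensive.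
Import Order.TTheory GRing.Theory Num.Theory.
Local Open Scope ring_scope.

Definition sqnorm (R : realFieldType) (s : nat) (v : 'rV[R]_s) : R :=
  \sum_(k < s) v 0 k ^+ 2.

(* Points p^1..p^N in R^s are the rows of P : 'M_(N, s).
   The embedding dimension = dimension of the affine span of the points
   = dimension of the linear span of all differences p^i - p^j. *)
Definition affine_dim (R : realFieldType) (N s : nat) (P : 'M[R]_(N, s)) : nat :=
  \rank (\sum_(i < N) \sum_(j < N) <<row i P - row j P>>)%MS.

Definition is_EDM_dim (R : realFieldType) (N : nat) (D : 'M[R]_N) (r : nat) : Prop :=
  exists (s : nat) (P : 'M[R]_(N, s)),
    (forall i j : 'I_N, D i j = sqnorm (row i P - row j P)) /\ affine_dim P = r.

(* Kronecker product, with the standard row-major indexing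
   (i, k) |-> i * n + k (0-based). *)
Lemma kron_hi_proof (m n : nat) (a : 'I_(m * n)) : (a %/ n < m)%N.
Proof. by rewrite ltn_divLR ?(mulnC m) //; case: n a => [|n] [a Ha] //=; rewrite muln0 in Ha. Qed.

Lemma kron_lo_proof (m n : nat) (a : 'I_(m * n)) : (a %% n < n)%N.
Proof. by case: n a => [|n] [a Ha] //=; [rewrite muln0 in Ha | rewrite ltn_mod]. Qed.

Definition kron_hi (m n : nat) (a : 'I_(m * n)) : 'I_m := Ordinal (kron_hi_proof a).
Definition kron_lo (m n : nat) (a : 'I_(m * n)) : 'I_n := Ordinal (kron_lo_proof a).

Definition kron (R : ringType) (m n : nat) (A : 'M[R]_m) (B : 'M[R]_n) : 'M[R]_(m * n) :=
  \matrix_(a, b) (A (kron_hi a) (kron_hi b) * B (kron_lo a) (kron_lo b)).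

Definition ones (R : ringType) (k : nat) : 'M[R]_k := const_mx 1.

From mathcomp Require Import all_boot all_order all_algebra.
From mathcomp Require Import zify.
Set Implicit Arguments. Unset Strict Implicit. Unset Printing Implicit Defensive.
Import Order.TTheory GRing.Theory Num.Theory.
Local Open Scope ring_scope.

(* If the points p_i in R^s1 realise D1 and q_k in R^s2 realise D2, then the
   points (p_i, q_k) in R^(s1 + s2) realise D, because the squared norm is
   additive over the two coordinate blocks.  Their difference space is the
   direct sum of the two difference spaces: it contains (p_i - p_j, 0), by
   fixing k, and (0, q_k - q_l), by fixing i.  Hence the dimensions add. *)

Section DifferenceSpace.

Variable F : fieldType.

Definition diffmx (N s : nat) (P : 'M[F]_(N, s)) : 'M[F]_s :=
  (\sum_(i < N) \sum_(j < N) <<row i P - row j P>>)%MS.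

Lemma diffmx_sup (N s : nat) (P : 'M[F]_(N, s)) (i j : 'I_N) :
  (row i P - row j P <= diffmx P)%MS.
Proof.
by apply: (sumsmx_sup i) => //; apply: (sumsmx_sup j) => //; rewrite genmxE.
Qed.

Lemma diffmx_subP (N s p : nat) (P : 'M[F]_(N, s)) (S : 'M[F]_(p, s)) :
  reflect (forall i j, (row i P - row j P <= S)%MS) (diffmx P <= S)%MS.
Proof.
apply: (iffP idP) => [PS i j | PS].
  exact: submx_trans (diffmx_sup P i j) PS.
by apply/sumsmx_subP => i _; apply/sumsmx_subP => j _; rewrite genmxE.
Qed.

Lemma diffmxMr_sub (N s t p : nat) (P : 'M[F]_(N, s)) (A : 'M[F]_(s, t))
    (S : 'M[F]_(p, t)) :
  (forall i j, ((row i P - row j P) *m A <= S)%MS) -> (diffmx P *m A <= S)%MS.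
Proof.
move=> PAS; rewrite sumsmxMr_gen; apply/sumsmx_subP => i _.
rewrite genmxE sumsmxMr_gen; apply/sumsmx_subP => j _.
by rewrite genmxE (eqmxMr _ (genmxE _)).
Qed.

Lemma row_mx_sub_diag_block (s1 s2 p1 p2 : nat) (u : 'rV[F]_s1) (v : 'rV[F]_s2)
    (S1 : 'M[F]_(p1, s1)) (S2 : 'M[F]_(p2, s2)) :
  (u <= S1)%MS -> (v <= S2)%MS -> (row_mx u v <= block_mx S1 0 0 S2)%MS.
Proof.
move=> /submxP [w1 ->] /submxP [w2 ->].
have -> : row_mx (w1 *m S1) (w2 *m S2) = row_mx w1 w2 *m block_mx S1 0 0 S2.
  by rewrite mul_row_block !mulmx0 addr0 add0r.
exact: submxMl.
Qed.

Lemma diag_block_sub (s1 s2 p1 p2 q : nat) (S1 : 'M[F]_(p1, s1))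
    (S2 : 'M[F]_(p2, s2)) (T : 'M[F]_(q, s1 + s2)) :
  (S1 *m row_mx 1%:M 0 <= T)%MS -> (S2 *m row_mx 0 1%:M <= T)%MS ->
  (block_mx S1 0 0 S2 <= T)%MS.
Proof.
rewrite !mul_mx_row !mulmx1 !mulmx0 => S1T S2T.
by rewrite -[block_mx _ _ _ _]/(col_mx _ _) col_mx_sub S1T.
Qed.

End DifferenceSpace.

Section ProductConfiguration.

Variables (F : fieldType) (m n s1 s2 : nat).
Variables (P1 : 'M[F]_(m, s1)) (P2 : 'M[F]_(n, s2)).

Definition config_prod : 'M[F]_(m * n, s1 + s2) :=
  \matrix_a row_mx (row (kron_hi a) P1) (row (kron_lo a) P2).

Lemma sub_row_config_prod (a b : 'I_(m * n)) :
  row a config_prod - row b config_prod =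
  row_mx (row (kron_hi a) P1 - row (kron_hi b) P1)
         (row (kron_lo a) P2 - row (kron_lo b) P2).
Proof. by rewrite !rowK opp_row_mx add_row_mx. Qed.

Lemma kron_idx_proof (i : 'I_m) (k : 'I_n) : (i * n + k < m * n)%N.
Proof. have := ltn_ord i; have := ltn_ord k; nia. Qed.

Definition kron_idx (i : 'I_m) (k : 'I_n) : 'I_(m * n) :=
  Ordinal (kron_idx_proof i k).

Lemma kron_hi_idx i k : kron_hi (kron_idx i k) = i.
Proof.
apply/val_inj => /=; have kn := ltn_ord k.
by rewrite divnMDl ?divn_small ?addn0 //; lia.
Qed.

Lemma kron_lo_idx i k : kron_lo (kron_idx i k) = k.
Proof. by apply/val_inj => /=; rewrite modnMDl modn_small. Qed.

Lemma diffmx_config_prod :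
  (0 < m)%N -> (0 < n)%N ->
  (diffmx config_prod == block_mx (diffmx P1) 0 0 (diffmx P2))%MS.
Proof.
move=> m_gt0 n_gt0; apply/andP; split.
  apply/diffmx_subP => a b; rewrite sub_row_config_prod.
  by apply: row_mx_sub_diag_block; apply: diffmx_sup.
pose i0 : 'I_m := Ordinal m_gt0; pose k0 : 'I_n := Ordinal n_gt0.
apply: diag_block_sub; apply: diffmxMr_sub => i j; rewrite mul_mx_row mulmx1 mulmx0.
- have := sub_row_config_prod (kron_idx i k0) (kron_idx j k0).
  by rewrite !kron_hi_idx !kron_lo_idx subrr => <-; apply: diffmx_sup.
- have := sub_row_config_prod (kron_idx i0 i) (kron_idx i0 j).
  by rewrite !kron_hi_idx !kron_lo_idx subrr => <-; apply: diffmx_sup.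
Qed.

End ProductConfiguration.

Lemma sqnorm_row_mx (R : realFieldType) (s1 s2 : nat) (u : 'rV[R]_s1)
    (v : 'rV[R]_s2) :
  sqnorm (row_mx u v) = sqnorm u + sqnorm v.
Proof.
rewrite /sqnorm big_split_ord /=.
by congr (_ + _); apply: eq_bigr => i _; rewrite ?row_mxEl ?row_mxEr.
Qed.

Lemma kron_ones_l (R : ringType) (m n : nat) (B : 'M[R]_n) (a b : 'I_(m * n)) :
  kron (ones R m) B a b = B (kron_lo a) (kron_lo b).
Proof. by rewrite !mxE mul1r. Qed.

Lemma kron_ones_r (R : ringType) (m n : nat) (A : 'M[R]_m) (a b : 'I_(m * n)) :
  kron A (ones R n) a b = A (kron_hi a) (kron_hi b).
Proof. by rewrite !mxE mulr1. Qed.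

Theorem theorem4 (R : realFieldType) (m n : nat) (D1 : 'M[R]_m) (D2 : 'M[R]_n)
    (r1 r2 : nat) :
  (0 < m)%N -> (0 < n)%N ->
  is_EDM_dim D1 r1 -> is_EDM_dim D2 r2 ->
  is_EDM_dim (kron (ones R m) D2 + kron D1 (ones R n)) (r1 + r2).
Proof.
move=> m_gt0 n_gt0 [s1 [P1 [D1E <-]]] [s2 [P2 [D2E <-]]].
exists (s1 + s2)%N, (config_prod P1 P2); split.
  move=> a b; rewrite sub_row_config_prod sqnorm_row_mx -D1E -D2E.
  by rewrite mxE kron_ones_l kron_ones_r addrC.
rewrite /affine_dim -rank_diag_block_mx.
exact/eqmx_rank/diffmx_config_prod.
Qed.
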